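(* Let $m$ be a non-negative integer and let $A,D$ be $k$-tuples of elements of $\mathbb{Z}/m\mathbb{Z}$. Then for every non-negative integer $i$, $$\partial^i\,\mathrm{IAP}(A,D)=(-1)^i\,\mathrm{IAP}\big(AC_k^{(i)}+DT_k^{(i)},\,DC_k^{(i)}\big),$$ where $C_k^{(i)}=\big(\sum_{\alpha\in\mathbb{Z}}\binom{i}{\alpha k+r-s}\big)_{1\le r,s\le k}$ and $T_k^{(i)}=\big(\sum_{\alpha\in\mathbb{Z}}\alpha\binom{i}{\alpha k+r-s}\big)_{1\le r,s\le k}$.
   Context: $\mathbb{Z}/0\mathbb{Z}=\mathbb{Z}$; $\binom{a}{b}=0$ if $b<0$ or $b>a$. Tuples are row vectors, integer matrices act after reduction mod $m$. $\mathrm{IAP}(A,D)$, for $A=(a_0,\dots,a_{k-1})$, $D=(d_0,\dots,d_{k-1})$, is $(u_j)_{j\in\mathbb{Z}}$ with $u_{qk+r}=a_r+qd_r$. For a sequence $S=(u_j)_{j\in\mathbb{Z}}$, $\partial S=(-u_j-u_{j+1})_{j\in\mathbb{Z}}$, and $\partial^i$ is the $i$-th iterate ($\partial^0 S=S$). *)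

(* Z/mZ is modelled by int with congruence mod m
   (intdiv's (a = b %[mod m])%Z, which for m = 0 is plain equality). *)
From mathcomp Require Import all_boot all_order all_algebra.
Set Implicit Arguments. Unset Strict Implicit. Unset Printing Implicit Defensive.
Import Order.TTheory GRing.Theory Num.Theory.
Local Open Scope ring_scope.

Definition binomZ (a : nat) (b : int) : int :=
  match b with Posz n => ('C(a, n))%:Z | Negz _ => 0 end.

(* entry n (0-based) of a row vector, 0 if out of range *)
Definition rvget (k : nat) (A : 'rV[int]_k) (n : nat) : int :=
  odflt 0 (omap (fun r : 'I_k => A 0 r) (insub n)).

(* IAP(A,D) : u_{qk+r} = a_r + q d_r, with 0 <= r < k *)
Definition IAP (k : nat) (A D : 'rV[int]_k) : int -> int :=
  fun j => let q := (j %/ k%:Z)%Z in let r := absz (j %% k%:Z)%Z in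
           rvget A r + q * rvget D r.

Definition dpart (S : int -> int) : int -> int := fun j => - S j - S (j + 1).

(* summation range for alpha: alpha = j - (i+1), j < 2i+3, i.e. |alpha| <= i+1.
   For k >= 1 every alpha with binom(i, alpha k + r - s) <> 0 lies in 0..i,
   so this finite sum equals the sum over all alpha in Z. *)
Definition alphaZ (i j : nat) : int := j%:Z - (i.+1)%:Z.

Definition Cmx (k i : nat) : 'M[int]_k :=
  \matrix_(r < k, s < k)
    \sum_(j < (2 * i + 3)%N) binomZ i (alphaZ i j * k%:Z + r%:Z - s%:Z).

Definition Tmx (k i : nat) : 'M[int]_k :=
  \matrix_(r < k, s < k)
    \sum_(j < (2 * i + 3)%N) alphaZ i j * binomZ i (alphaZ i j * k%:Z + r%:Z - s%:Z).

(* Pascal's rule gives [∂^i S j = (-1)^i Σ_t C(i,t) S(j+t)].  Write [j = q k + s]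
   with [0 <= s < k]; the term of IAP(A,D) at [j + t] is [a_r + (q + α) d_r], where
   [s + t = α k + r] is the Euclidean division by [k].  Expanding the row-vector
   products, the right-hand side is [(-1)^i Σ_(r,α) C(i, α k + r - s) (a_r + (q + α) d_r)],
   and Euclidean division makes [(r, α) ↦ α k + r - s] a bijection onto the indices
   [t], so both sides agree already in Z. *)

From mathcomp Require Import all_boot all_order all_algebra zify ring.
Import Order.TTheory GRing.Theory Num.Theory.
Local Open Scope ring_scope.

Lemma sum_binS (i : nat) (f : nat -> int) :
  \sum_(t < i.+2) 'C(i.+1, t)%:Z * f t =
  \sum_(t < i.+1) 'C(i, t)%:Z * f t + \sum_(t < i.+1) 'C(i, t)%:Z * f t.+1.
Proof.
rewrite big_ord_recl [in RHS]big_ord_recl !bin0 -addrA; congr (_ + _).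
under eq_bigr do rewrite /bump /= binS PoszD mulrDl.
by rewrite big_split /= big_ord_recr /= bin_small // mul0r addr0 addrC.
Qed.

Lemma iter_dpart (S : int -> int) (i : nat) (j : int) :
  iter i dpart S j = (-1) ^+ i * \sum_(t < i.+1) 'C(i, t)%:Z * S (j + t%:Z).
Proof.
elim: i j => [|i IH] j; first by rewrite big_ord1 bin0 expr0 !mul1r addr0.
rewrite iterS /dpart !IH (sum_binS i (fun t => S (j + t%:Z))) exprS.
under [X in _ = _ * (_ + X)]eq_bigr => t _ do rewrite -[t.+1]addn1 PoszD addrA addrAC.
ring.
Qed.

Lemma binomZ_sum (i : nat) (x : int) :
  binomZ i x = \sum_(t < i.+1) (t%:Z == x)%:R * 'C(i, t)%:Z.
Proof.
case: x => [n|n] /=; last by rewrite big1.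
under eq_bigr do rewrite eqz_nat mulr_natl mulrb.
rewrite -big_mkcond (big_ord1_eq _ (fun t => 'C(i, t)%:Z)).
by case: ltnP => // /bin_small ->.
Qed.

Lemma eqz_euclid (k r n : nat) (a : int) : (r < k)%N ->
  (a * k%:Z + r%:Z == n%:Z) = (r == n %% k)%N && (a == (n %/ k)%N%:Z).
Proof.
move=> lt_rk; have k_gt0 : (0 < k)%N := leq_ltn_trans (leq0n r) lt_rk.
have k_neq0 : k%:Z != 0 by rewrite eqz_nat -lt0n.
apply/eqP/andP => [E | [/eqP -> /eqP ->]]; last by rewrite -PoszM -PoszD -divn_eq.
have r_range : (0 <= r%:Z < k%:Z) by rewrite lez_nat ltz_nat lt_rk.
split; last by rewrite -divz_nat -E divzMDl // divz_small ?addr0.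
by rewrite -eqz_nat -modz_nat -E modzMDl modz_small.
Qed.

Lemma eqz_alphaZ (i j a : nat) : (alphaZ i j == a%:Z) = (j == a + i.+1)%N.
Proof. by rewrite /alphaZ subr_eq -PoszD eqz_nat. Qed.

Lemma sum_binomZ_euclid (f : nat -> int -> int) (k i s : nat) : (s < k)%N ->
  \sum_(r < k) \sum_(j < 2 * i + 3)
     binomZ i (alphaZ i j * k%:Z + r%:Z - s%:Z) * f r (alphaZ i j) =
  \sum_(t < i.+1) 'C(i, t)%:Z * f ((s + t) %% k)%N ((s + t) %/ k)%N%:Z.
Proof.
move=> lt_sk; have k_gt0 : (0 < k)%N := leq_ltn_trans (leq0n s) lt_sk.
under eq_bigr do under eq_bigr do rewrite binomZ_sum mulr_suml.
under eq_bigr do rewrite exchange_big.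
rewrite exchange_big; apply: eq_bigr => t _.
have lt_quo : ((s + t) %/ k + i.+1 < 2 * i + 3)%N.
  have : ((s + t) %/ k < i.+2)%N by rewrite ltn_divLR //; have := ltn_ord t; nia.
  lia.
pose r0 : 'I_k := Ordinal (ltn_pmod (s + t) k_gt0).
pose j0 : 'I_(2 * i + 3) := Ordinal lt_quo.
rewrite pair_big /=; under eq_bigr do rewrite -mulrA mulr_natl mulrb.
rewrite -big_mkcond (big_pred1 (r0, j0)) /=; first by rewrite /alphaZ PoszD addrK.
move=> [r j] /=.
by rewrite eq_sym subr_eq -PoszD (addnC t) eqz_euclid // eqz_alphaZ xpair_eqE -!val_eqE.
Qed.

Lemma rvgetE (k : nat) (A : 'rV[int]_k) (r : 'I_k) : rvget A r = A 0 r.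
Proof. by rewrite /rvget valK. Qed.

Lemma IAP_addn (k : nat) (A D : 'rV[int]_k) (q : int) (n : nat) : (0 < k)%N ->
  IAP A D (q * k%:Z + n%:Z) =
  rvget A (n %% k) + (q + (n %/ k)%N%:Z) * rvget D (n %% k).
Proof.
move=> k_gt0; have k_neq0 : k%:Z != 0 by rewrite eqz_nat -lt0n.
by rewrite /IAP divzMDl // modzMDl divz_nat modz_nat absz_nat.
Qed.

Lemma IAP_mulmx_Cmx_Tmx (k i : nat) (A D : 'rV[int]_k) (q : int) (s : nat) :
  (s < k)%N ->
  IAP (A *m Cmx k i + D *m Tmx k i) (D *m Cmx k i) (q * k%:Z + s%:Z) =
  \sum_(r < k) \sum_(j < 2 * i + 3) binomZ i (alphaZ i j * k%:Z + r%:Z - s%:Z) *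
     (rvget A r + (q + alphaZ i j) * rvget D r).
Proof.
move=> lt_sk; have k_gt0 : (0 < k)%N := leq_ltn_trans (leq0n s) lt_sk.
rewrite IAP_addn // modn_small // divn_small // addr0.
rewrite !(rvgetE _ _ (Ordinal lt_sk)) !mxE mulr_sumr -!big_split /=.
apply: eq_bigr => r _; rewrite !mxE !rvgetE !mulr_sumr -!big_split /=.
by apply: eq_bigr => j _; ring.
Qed.

Lemma int_divmod_ord (k : nat) (j : int) : (0 < k)%N ->
  exists q (s : 'I_k), j = q * k%:Z + s%:Z.
Proof.
move=> k_gt0; have k_neq0 : k%:Z != 0 by rewrite eqz_nat -lt0n.
have mod_ge0 : 0 <= (j %% k%:Z)%Z by rewrite modz_ge0.
have lt_mod : (`|(j %% k%:Z)%Z| < k)%N by rewrite -ltz_nat gez0_abs // ltz_pmod.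
by exists (j %/ k%:Z)%Z, (Ordinal lt_mod); rewrite /= gez0_abs // -divz_eq.
Qed.

Theorem proposition6 (m k : nat) (A D : 'rV[int]_k) (i : nat) :
  (0 < k)%N ->
  forall j : int,
    (iter i dpart (IAP A D) j =
       (-1) ^+ i * IAP (A *m Cmx k i + D *m Tmx k i) (D *m Cmx k i) j
     %[mod m%:Z])%Z.
Proof.
move=> k_gt0 j; congr (_ %% _)%Z.
have [q [[s lt_sk] ->]] := int_divmod_ord _ j k_gt0.
rewrite iter_dpart IAP_mulmx_Cmx_Tmx //; congr (_ * _).
rewrite (sum_binomZ_euclid (fun r a => rvget A r + (q + a) * rvget D r)) //.
by apply: eq_bigr => t _; rewrite -addrA -PoszD IAP_addn.
Qed.
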